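(* Let $F=(F_1,\dots,F_n)$ with $F_i\in K[[x_1,\dots,x_n]]$, put $H_i:=x_i-F_i$, and assume each $H_i$ contains only monomials of degree $\ge 2$ and that the Jacobian determinant $j(F)=\det\big(\partial F_j/\partial x_i\big)_{i,j}$ equals $1$. Let $G=(G_1,\dots,G_n)$, $G_i\in K[[x_1,\dots,x_n]]$, be the compositional inverse of $F$ (so $G_i(F_1,\dots,F_n)=x_i$ and $F_i(G_1,\dots,G_n)=x_i$). Then for every $i$ $$G_i=\sum_{\underline p\in\mathbb N_0^n}\frac{1}{\underline p!}\,\underline\partial^{\underline p}\big(x_i H^{\underline p}\big),$$ and, more generally, for every $U\in K[[x_1,\dots,x_n]]$, $$U=\sum_{\underline p\in\mathbb N_0^n}\frac{1}{\underline p!}\,\underline\partial^{\underline p}\big(U(F)\,H^{\underline p}\big).$$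
   Context: $K$ is a field of characteristic $0$. Multi-index notation: $\underline\partial^{\underline p}=\partial_1^{p_1}\cdots\partial_n^{p_n}$ with $\partial_i=\partial/\partial x_i$ acting on formal power series, $H^{\underline p}=H_1^{p_1}\cdots H_n^{p_n}$, $\underline p!=p_1!\cdots p_n!$, and $U(F)=U(F_1,\dots,F_n)$. The sums converge in the $(x_1,\dots,x_n)$-adic topology. *)

From mathcomp Require Import all_boot all_order all_algebra all_fingroup.
Set Implicit Arguments. Unset Strict Implicit. Unset Printing Implicit Defensive.
Import GRing.Theory.
Local Open Scope ring_scope.

Section FPS.
Variables (K : fieldType) (n : nat).

Definition mono := {ffun 'I_n -> nat}.
Definition mdeg (m : mono) : nat := (\sum_i m i)%N.
Definition madd (a b : mono) : mono := [ffun i => (a i + b i)%N].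
Definition msub (a b : mono) : mono := [ffun i => (a i - b i)%N].
Definition mle (a b : mono) : bool := [forall i, (a i <= b i)%N].
Definition munit (i : 'I_n) : mono := [ffun j => nat_of_bool (i == j)].
Definition mzero : mono := [ffun _ => 0%N].
Definition mfact (p : mono) : nat := (\prod_i (p i)`!)%N.
(* bounded exponent vectors, used to enumerate finite index ranges *)
Definition mlow (d : nat) (a : {ffun 'I_n -> 'I_d}) : mono := [ffun i => nat_of_ord (a i)].

Definition fps := mono -> K.

Definition fps0 : fps := fun _ => 0.
Definition fps1 : fps := fun m => if m == mzero then 1 else 0.
Definition fps_X (i : 'I_n) : fps := fun m => if m == munit i then 1 else 0.
Definition fps_add (f g : fps) : fps := fun m => f m + g m.
Definition fps_sub (f g : fps) : fps := fun m => f m - g m.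
Definition fps_scale (c : K) (f : fps) : fps := fun m => c * f m.
Definition fps_mul (f g : fps) : fps := fun m =>
  \sum_(a : {ffun 'I_n -> 'I_(mdeg m).+1} | mle (mlow a) m)
     f (mlow a) * g (msub m (mlow a)).
Definition fps_exp (f : fps) (k : nat) : fps := iter k (fps_mul f) fps1.
Definition fps_mpow (F : 'I_n -> fps) (p : mono) : fps :=
  \big[fps_mul/fps1]_(i < n) fps_exp (F i) (p i).

(* Substitution U(F) = sum_p U_p F^p, for F with zero constant terms
   (then only p with |p| <= |m| contribute to the coefficient of x^m). *)
Definition fps_comp (U : fps) (F : 'I_n -> fps) : fps := fun m =>
  \sum_(p : {ffun 'I_n -> 'I_(mdeg m).+1}) U (mlow p) * fps_mpow F (mlow p) m.

Definition fps_deriv (i : 'I_n) (f : fps) : fps := fun m =>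
  (m i).+1%:R * f (madd m (munit i)).
Definition fps_derivs (p : mono) (f : fps) : fps :=
  foldr (fun i g => iter (p i) (fps_deriv i) g) f (enum 'I_n).

Definition fps_det (M : 'I_n -> 'I_n -> fps) : fps :=
  \big[fps_add/fps0]_(s : 'S_n)
     fps_scale ((-1) ^+ s) (\big[fps_mul/fps1]_(i < n) M i (s i)).

(* Summability in the (x_1,...,x_n)-adic topology: for each monomial only
   finitely many members of the family have a nonzero coefficient, and the
   sum is computed coefficientwise. *)
Definition fps_has_sum (T : mono -> fps) (S : fps) : Prop :=
  forall m, exists s : seq mono,
    [/\ uniq s, (forall p, p \notin s -> T p m = 0) & S m = \sum_(p <- s) T p m].

End FPS.

Arguments fps_X {K n} i.

(* Write F_j = x_j - h_j with h a polynomial truncation of H, and put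
   T(V) := sum_(|p| <= N) (1/p!) d^p (V h^p); congruences are taken modulo
   terms of degree > N.  Leibniz' rule for d^p (x_j W) gives T(V F_j) = x_j T(V),
   hence T(sum_a c_a F^a) = (sum_a c_a x^a) T(1).  Differentiating under T gives
   sum_k d_k T(V d_j F_k) = T(d_j V); applied to the entries of the adjugate of
   the Jacobian matrix, whose rows are divergence free (Piola's identity), it
   shows that T(det J) = T(1) has vanishing derivatives, so T(1) = 1.  Hence
   T(U(F)) = U, and the power series statement follows coefficientwise by
   truncating at a large enough degree. *)

From Pilot Require Import Defs.
From mathcomp Require Import all_boot all_order all_algebra all_fingroup.
From mathcomp Require Import mpoly.
From mathcomp Require Import ring.
Set Implicit Arguments. Unset Strict Implicit. Unset Printing Implicit Defensive.
Import GRing.Theory.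
Local Open Scope ring_scope.

Lemma eq_big_uniq_supp (T : eqType) (V : nmodType) (s1 s2 : seq T) (P : pred T)
    (G : T -> V) :
  uniq s1 -> uniq s2 -> (forall x, ~~ P x -> G x = 0) ->
  (forall x, P x -> (x \in s1) = (x \in s2)) ->
  \sum_(x <- s1) G x = \sum_(x <- s2) G x.
Proof.
move=> u1 u2 G0 Hm.
rewrite (bigID P) /= [X in _ + X]big1 ?addr0; last by move=> x /G0.
rewrite [RHS](bigID P) /= [X in _ + X]big1 ?addr0; last by move=> x /G0.
rewrite -[LHS]big_filter -[RHS]big_filter; apply: perm_big.
apply: uniq_perm; rewrite ?filter_uniq // => x.
by rewrite !mem_filter; case Px: (P x) => //=; apply: Hm.
Qed.

Section MonomialSums.
Variable n : nat.

Lemma mnm_ind (P : 'X_{1..n} -> Prop) :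
  P 0%MM -> (forall q i, P q -> P (q + U_(i))%MM) -> forall p, P p.
Proof.
move=> P0 PS p; move: {2}(mdeg p) (leqnn (mdeg p)) => d.
elim: d p => [|d IH] p Hp; first by move: Hp; rewrite leqn0 mdeg_eq0 => /eqP ->.
have [->//|nz] := eqVneq p 0%MM.
have [i Hi] : exists i, p i != 0%N.
  apply/existsP; apply: contraR nz; rewrite negb_exists => /forallP H.
  by apply/eqP/mnmP => i; rewrite mnm0E; apply/eqP; rewrite -[_ == _]negbK H.
have le : (U_(i) <= p)%MM by rewrite lep1mP.
rewrite -(submK le); apply/PS/IH.
by move: Hp; rewrite -{1}(submK le) mdegD mdeg1 addn1 ltnS.
Qed.

Definition mnms_le N : seq 'X_{1..n} := map val (enum {: 'X_{1..n < N.+1}}).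

Lemma mnms_le_uniq N : uniq (mnms_le N).
Proof. by rewrite map_inj_uniq ?enum_uniq //; apply: val_inj. Qed.

Lemma mem_mnms_le N p : (p \in mnms_le N) = (mdeg p <= N)%N.
Proof.
apply/mapP/idP => [[k _ ->]|le]; first by rewrite -ltnS bmdeg.
have lt : (mdeg p < N.+1)%N by [].
by exists (BMultinom lt); rewrite ?mem_enum.
Qed.

Lemma big_bmnm (V : nmodType) N (G : 'X_{1..n} -> V) :
  \sum_(k : 'X_{1..n < N.+1}) G (val k) = \sum_(p <- mnms_le N) G p.
Proof. by rewrite /mnms_le big_map big_enum. Qed.

Lemma big_mnms_le_split (V : nmodType) N N' (G : 'X_{1..n} -> V) : (N <= N')%N ->
  \sum_(p <- mnms_le N') G p =
  \sum_(p <- mnms_le N) G p + \sum_(p <- mnms_le N' | (N < mdeg p)%N) G p.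
Proof.
move=> le; rewrite (bigID (fun p => (N < mdeg p)%N)) /= addrC; congr (_ + _).
rewrite -[LHS]big_filter; apply: perm_big; apply: uniq_perm.
- by rewrite filter_uniq ?mnms_le_uniq.
- exact: mnms_le_uniq.
move=> p; rewrite mem_filter !mem_mnms_le -leqNgt.
by case: (leqP (mdeg p) N) => //= h; apply: leq_trans le.
Qed.

Lemma big_mnms_le_shift (R : pzRingType) (V : lmodType R) N k (G : 'X_{1..n} -> V) :
  \sum_(p <- mnms_le N.+1) (p k)%:R *: G p =
  \sum_(q <- mnms_le N) (q k).+1%:R *: G (q + U_(k))%MM.
Proof.
rewrite (bigID (fun p : 'X_{1..n} => (0 < p k)%N)) /= [X in _ + X]big1 ?addr0;
  last by move=> p; rewrite lt0n negbK => /eqP ->; rewrite scale0r.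
rewrite -[LHS]big_filter.
have -> : \sum_(q <- mnms_le N) (q k).+1%:R *: G (q + U_(k))%MM =
          \sum_(p <- map (fun q => q + U_(k))%MM (mnms_le N)) (p k)%:R *: G p.
  by rewrite [RHS]big_map; apply: eq_bigr => q _; rewrite mnmDE mnm1E eqxx addn1.
apply: perm_big; apply: uniq_perm; rewrite ?filter_uniq ?mnms_le_uniq //.
  by rewrite map_inj_uniq ?mnms_le_uniq //; apply: addIm.
move=> p; rewrite mem_filter mem_mnms_le; apply/andP/mapP => [[pos le]|[q]].
  have le1 : (U_(k) <= p)%MM by rewrite lep1mP -lt0n.
  exists (p - U_(k))%MM; last by rewrite submK.
  by rewrite mem_mnms_le -ltnS; move: le; rewrite -{1}(submK le1) mdegD mdeg1 addn1.
by rewrite mem_mnms_le => le ->; rewrite mnmDE mnm1E eqxx addn1 mdegD mdeg1 addn1.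
Qed.

Definition mnm_fact (p : 'X_{1..n}) : nat := (\prod_(i < n) (p i)`!)%N.

Lemma mnm_fact0 : mnm_fact 0%MM = 1%N.
Proof. by rewrite /mnm_fact big1 // => i _; rewrite mnm0E. Qed.

Lemma mnm_factD1 q i : mnm_fact (q + U_(i))%MM = (mnm_fact q * (q i).+1)%N.
Proof.
rewrite /mnm_fact (bigD1 i) //= [in RHS](bigD1 i) //= mnmDE mnm1E eqxx addn1 factS.
rewrite [RHS]mulnC mulnA; congr (_ * _ * _)%N.
by apply: eq_bigr => j ne; rewrite mnmDE mnm1E eq_sym (negbTE ne) addn0.
Qed.

Lemma mnm_subD1C (q : 'X_{1..n}) i j : i != j ->
  (q - U_(j) + U_(i) = q + U_(i) - U_(j))%MM.
Proof.
move=> ne; apply/mnmP => k; rewrite !(mnmDE, mnmBE) !mnm1E.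
by case: (eqVneq j k) => [<-|_]; rewrite ?(negbTE ne) ?addn0 ?subn0.
Qed.

End MonomialSums.

Section Order.
Variables (R : nzRingType) (n : nat).
Implicit Types (p q : {mpoly R[n]}).

Definition ordge (d : nat) p := forall m : 'X_{1..n}, (mdeg m < d)%N -> p@_m = 0.

Lemma ordge_le d d' p : (d' <= d)%N -> ordge d p -> ordge d' p.
Proof. by move=> le H m lt; apply: H; apply: leq_trans le. Qed.

Lemma ordge0 d : ordge d 0.
Proof. by move=> m _; rewrite mcoeff0. Qed.

Lemma ordgeD d p q : ordge d p -> ordge d q -> ordge d (p + q).
Proof. by move=> Hp Hq m lt; rewrite mcoeffD Hp ?Hq ?addr0. Qed.

Lemma ordgeN d p : ordge d p -> ordge d (- p).
Proof. by move=> Hp m lt; rewrite mcoeffN Hp ?oppr0. Qed.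

Lemma ordgeB d p q : ordge d p -> ordge d q -> ordge d (p - q).
Proof. by move=> Hp Hq; apply/ordgeD/ordgeN. Qed.

Lemma ordgeZ d c p : ordge d p -> ordge d (c *: p).
Proof. by move=> Hp m lt; rewrite mcoeffZ Hp ?mulr0. Qed.

Lemma ordge_sum d (I : Type) (r : seq I) (P : pred I) (F : I -> {mpoly R[n]}) :
  (forall i, P i -> ordge d (F i)) -> ordge d (\sum_(i <- r | P i) F i).
Proof. by move=> H; apply: (big_ind (ordge d)) => //; [apply: ordge0|apply: ordgeD]. Qed.

Lemma ordgeM a b p q : ordge a p -> ordge b q -> ordge (a + b) (p * q).
Proof.
move=> Hp Hq m lt; rewrite mcoeffM big1 // => k /eqP Em.
have {}lt : (mdeg (k.1 : 'X_{1..n}) + mdeg (k.2 : 'X_{1..n}) < a + b)%N.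
  by rewrite -mdegD -Em.
have [/Hp ->|le] := ltnP (mdeg k.1) a; first by rewrite mul0r.
rewrite Hq ?mulr0 // -(ltn_add2l (mdeg k.1)).
by apply: leq_trans lt _; rewrite leq_add2r.
Qed.

Lemma ordge_prod (I : Type) (r : seq I) (P : pred I) (F : I -> {mpoly R[n]})
    (d : I -> nat) :
  (forall i, P i -> ordge (d i) (F i)) ->
  ordge (\sum_(i <- r | P i) d i)%N (\prod_(i <- r | P i) F i).
Proof. by move=> H; apply: (big_ind2 ordge) => // *; apply: ordgeM. Qed.

Lemma ordgeX d p k : ordge d p -> ordge (d * k) (p ^+ k).
Proof.
move=> H; elim: k => [|k IH]; first by rewrite muln0.
by rewrite exprS mulnS; apply: ordgeM.
Qed.

Lemma ordgeXm a : ordge (mdeg a) 'X_[a].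
Proof. by move=> m lt; rewrite mcoeffX; case: eqP lt => [->|]; rewrite ?ltnn. Qed.

Lemma ordge_mderiv d i p : ordge d.+1 p -> ordge d (mderiv i p).
Proof.
move=> H m lt; rewrite mcoeff_mderiv H ?mul0rn //.
by rewrite mdegD mdeg1 addn1 ltnS.
Qed.

Lemma ordge_mderivm d a p : ordge (d + mdeg a) p -> ordge d (p^`M[a]).
Proof.
move=> H m lt; rewrite mcoeff_mderivm H ?mul0rn //.
by rewrite mdegD addnC ltn_add2r.
Qed.

End Order.

Section Derivatives.
Variables (R : comNzRingType) (n : nat).
Local Notation P := {mpoly R[n]}.

Definition mpow (g : 'I_n -> P) (p : 'X_{1..n}) : P := \prod_(i < n) g i ^+ p i.

Lemma mpow0 g : mpow g 0%MM = 1.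
Proof. by rewrite /mpow big1 // => i _; rewrite mnm0E expr0. Qed.

Lemma mpowD1 g q i : mpow g (q + U_(i))%MM = mpow g q * g i.
Proof.
rewrite /mpow (bigD1 i) //= [in RHS](bigD1 i) //= mnmDE mnm1E eqxx addn1 exprSr.
rewrite mulrAC; congr (_ * _ * _).
by apply: eq_bigr => j ne; rewrite mnmDE mnm1E eq_sym (negbTE ne) addn0.
Qed.

Lemma ordge_mpow d g p : (forall i, ordge d (g i)) -> ordge (d * mdeg p) (mpow g p).
Proof. by move=> H; rewrite mdegE big_distrr /=; apply: ordge_prod => i _; apply: ordgeX. Qed.

Lemma mderiv1 j : mderiv j (1 : P) = 0.
Proof. by rewrite -mpolyC1 mderivC. Qed.

Lemma mderiv_var i j : mderiv i ('X_j : P) = (j == i)%:R.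
Proof.
rewrite mderivX mnm1E; case: eqP => [->|_]; last by rewrite scale0r.
by rewrite -mpolyX0 scale1r; congr 'X_[_]; apply/mnmP=> k; rewrite mnmBE subnn mnm0E.
Qed.

Lemma mderiv_signr j (b : bool) (X : P) : mderiv j ((-1) ^+ b * X) = (-1) ^+ b * mderiv j X.
Proof. by case: b; rewrite ?expr0 ?mul1r ?expr1 ?mulN1r ?mderivN. Qed.

Lemma mderivmD1 (p : P) q i : p^`M[q + U_(i)] = mderiv i (p^`M[q]).
Proof. by rewrite mderivmDm mderivmU1m. Qed.

Lemma mderiv_mderivm i q (p : P) : mderiv i (p^`M[q]) = (mderiv i p)^`M[q].
Proof. by rewrite -mderivmD1 addmC mderivmDm mderivmU1m. Qed.

Lemma mderivm_mulX j (W : P) p :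
  ('X_j * W)^`M[p] = 'X_j * W^`M[p] + (p j)%:R *: W^`M[p - U_(j)].
Proof.
elim/mnm_ind: p => [|q i IH]; first by rewrite !mderivm0m mnm0E scale0r addr0.
rewrite !mderivmD1 IH mderivD mderivM mderiv_var mderivZ mnmDE mnm1E -!mderivmD1.
have [->|ne] := eqVneq i j; last first.
  by rewrite mul0r add0r addn0 mnm_subD1C.
have -> : (q j)%:R *: W^`M[q - U_(j) + U_(j)] = (q j)%:R *: W^`M[q].
  have [->|pos] := posnP (q j); first by rewrite !scale0r.
  by rewrite submK // lep1mP -lt0n.
by rewrite addmK mul1r addn1 -natr1 scalerDl scale1r -addrA addrC -addrA.
Qed.

Lemma mderiv_mpow j (g : 'I_n -> P) p :
  mderiv j (mpow g p) =
  \sum_(k < n) (p k)%:R *: (mderiv j (g k) * mpow g (p - U_(k))%MM).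
Proof.
elim/mnm_ind: p => [|q i IH].
  by rewrite mpow0 mderiv1 big1 // => k _; rewrite mnm0E scale0r.
rewrite mpowD1 mderivM IH mulr_suml (bigD1 i) //= [in RHS](bigD1 i) //=.
rewrite mnmDE mnm1E eqxx addmK addn1 -natr1 scalerDl scale1r.
have -> : (q i)%:R *: (mderiv j (g i) * mpow g (q - U_(i))%MM) * g i =
          (q i)%:R *: (mderiv j (g i) * mpow g q).
  have [->|pos] := posnP (q i); first by rewrite !scale0r mul0r.
  by rewrite -scalerAl -mulrA -mpowD1 submK // lep1mP -lt0n.
rewrite -!addrA; congr (_ + _); rewrite addrC mulrC; congr (_ + _).
apply: eq_bigr => k ne; rewrite mnmDE mnm1E eq_sym (negbTE ne) addn0.
by rewrite -scalerAl -mulrA -mpowD1 mnm_subD1C // eq_sym.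
Qed.

Lemma mderiv_prod (I : eqType) (r : seq I) (g : I -> P) j : uniq r ->
  mderiv j (\prod_(k <- r) g k) =
  \sum_(a <- r) mderiv j (g a) * \prod_(k <- r | k != a) g k.
Proof.
elim: r => [|x r IH] /=; first by rewrite !big_nil mderiv1.
move=> /andP [xr ur]; rewrite !big_cons mderivM IH // eqxx /=; congr (_ + _).
  congr (_ * _); rewrite big_seq_cond [RHS]big_seq_cond; apply: eq_bigl => k.
  by case kr: (k \in r) => //=; apply/esym/eqP => E; move: xr; rewrite -E kr.
rewrite mulr_sumr; apply: eq_big_seq => a ar.
rewrite big_cons; have -> : (x != a) = true by apply/eqP => E; move: xr; rewrite E ar.
by rewrite mulrCA.
Qed.

End Derivatives.

Section CharZero.
Variables (K : fieldType) (n : nat).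
Hypothesis charK : [pchar K] =i pred0.
Local Notation P := {mpoly K[n]}.

Lemma char0_natr_neq0 k : (0 < k)%N -> (k%:R : K) != 0.
Proof. by move=> pos; move/pcharf0P: charK => ->; rewrite -lt0n. Qed.

Lemma ordge_sub_coef0 N (p : P) :
  (forall l, ordge N (mderiv l p)) -> ordge N.+1 (p - (p@_0%MM)%:MP).
Proof.
move=> H m lt; rewrite mcoeffB mcoeffC.
have [->|nz] := eqVneq m 0%MM; first by rewrite ?eqxx ?mulr1 subrr.
rewrite mulr0 subr0.
have [l Hl] : exists l, m l != 0%N.
  apply/existsP; apply: contraR nz; rewrite negb_exists => /forallP Hm.
  by apply/eqP/mnmP => i; rewrite mnm0E; apply/eqP; rewrite -[_ == _]negbK Hm.
have le : (U_(l) <= m)%MM by rewrite lep1mP.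
have := H l (m - U_(l))%MM; rewrite mcoeff_mderiv submK //.
have -> : (mdeg (m - U_(l)) < N)%N.
  by move: lt; rewrite -{1}(submK le) mdegD mdeg1 addn1 ltnS.
move=> /(_ isT) /eqP; rewrite -mulr_natr mulf_eq0 (negbTE (char0_natr_neq0 _)) //.
by rewrite orbF => /eqP.
Qed.

Section Piola.
Variables (g : 'I_n -> P) (l : 'I_n).
Local Notation A := (\matrix_(j, k) mderiv j (g k) : 'M[P]_n).

Definition piola_term (j a : 'I_n) (s : 'S_n) : P :=
  if (s j == l) && (j != a) then
    (-1) ^+ s * (mderiv j (mderiv a (g (s a))) *
                 \prod_(k | (j != k) && (k != a)) A k (s k))
  else 0.

Lemma mderiv_adj j : mderiv j (\adj A l j) = \sum_a \sum_s piola_term j a s.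
Proof.
rewrite mxE expand_cofactor raddf_sum /= exchange_big /=.
rewrite [RHS](bigID (fun s : 'S_n => s j == l)) /= [X in _ + X]big1 ?addr0; last first.
  by move=> s /negbTE sj; apply: big1 => a _; rewrite /piola_term sj.
apply: eq_bigr => s sj; rewrite mderiv_signr -big_filter mderiv_prod; last first.
  by rewrite filter_uniq // index_enum_uniq.
rewrite big_filter mulr_sumr big_mkcond /=; apply: eq_bigr => a _.
rewrite /piola_term sj /=; case: ifP => // ja; congr (_ * (_ * _)).
  by rewrite mxE.
by rewrite big_filter_cond.
Qed.

(* Composing s with the transposition (j a) swaps the order of the two
   derivatives and flips the sign of the permutation. *)
Lemma piola_termC j a : \sum_s piola_term a j s = - \sum_s piola_term j a s.
Proof.
have [<-|ne] := eqVneq j a.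
  by rewrite big1 ?oppr0 // => s _; rewrite /piola_term eqxx andbF.
rewrite (reindex_inj (mulgI (tperm j a))) /= -sumrN; apply: eq_bigr => s _.
rewrite /piola_term !permM tpermR tpermL [a == j]eq_sym.
case: ifP => _; last by rewrite oppr0.
rewrite odd_mul_tperm ne /= mderiv_comm.
have -> : (-1) ^+ (~~ odd_perm s) = - (-1) ^+ (odd_perm s) :> P.
  by case: (odd_perm s); rewrite ?expr0 ?expr1 ?opprK.
rewrite mulNr; congr (- (_ * (_ * _))).
apply: eq_big => k; first by rewrite andbC [a == k]eq_sym [k == j]eq_sym.
by move=> /andP [jk ka]; rewrite permM tpermD // eq_sym.
Qed.

Lemma sum_mderiv_adj : \sum_j mderiv j (\adj A l j) = 0.
Proof.
rewrite (eq_bigr _ (fun j _ => mderiv_adj j)); set S := \sum_j _.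
have SS : S = - S.
  rewrite {1}/S exchange_big /= -sumrN; apply: eq_bigr => x _.
  by rewrite -sumrN; apply: eq_bigr => y _; apply: piola_termC.
have : 2%:R *: S == 0 by rewrite scaler_nat mulr2n {1}SS addNr.
by rewrite scaler_eq0 (negbTE (char0_natr_neq0 _)) //= => /eqP.
Qed.

End Piola.
End CharZero.

Section Lagrange.
Variables (K : fieldType) (n : nat) (h : 'I_n -> {mpoly K[n]}).
Hypothesis h_ord2 : forall i, ordge 2 (h i).
Hypothesis charK : [pchar K] =i pred0.
Local Notation P := {mpoly K[n]}.

Definition lagr_term (V : P) (p : 'X_{1..n}) : P :=
  (mnm_fact p)%:R^-1 *: (V * mpow h p)^`M[p].
Definition lagr N V := \sum_(p <- mnms_le n N) lagr_term V p.
Definition fvar j : P := 'X_j - h j.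
Definition jacobian : 'M[P]_n := \matrix_(j, k) mderiv j (fvar k).

Lemma lagrD N V W : lagr N (V + W) = lagr N V + lagr N W.
Proof.
rewrite -big_split; apply: eq_bigr => p _.
by rewrite /lagr_term mulrDl mderivmD scalerDr.
Qed.

Lemma lagrZ N c V : lagr N (c *: V) = c *: lagr N V.
Proof.
rewrite scaler_sumr; apply: eq_bigr => p _.
by rewrite /lagr_term -scalerAl mderivmZ !scalerA mulrC.
Qed.

Lemma lagr0 N : lagr N 0 = 0.
Proof. by rewrite -(scale0r 0) lagrZ !scale0r. Qed.

Lemma lagrN N V : lagr N (- V) = - lagr N V.
Proof. by rewrite -scaleN1r lagrZ scaleN1r. Qed.

Lemma lagrB N V W : lagr N (V - W) = lagr N V - lagr N W.
Proof. by rewrite lagrD lagrN. Qed.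

Lemma lagr_sum N (I : Type) (r : seq I) (Q : pred I) (F : I -> P) :
  lagr N (\sum_(i <- r | Q i) F i) = \sum_(i <- r | Q i) lagr N (F i).
Proof. exact: (big_morph (lagr N) (lagrD N) (lagr0 N)). Qed.

Lemma ordge_lagr_term d V p : ordge d V -> ordge (d + mdeg p) (lagr_term V p).
Proof.
move=> HV; apply/ordgeZ/ordge_mderivm; rewrite -addnA addnn -mul2n.
by apply: ordgeM => //; apply: ordge_mpow.
Qed.

Lemma ordge_lagr d N V : ordge d V -> ordge d (lagr N V).
Proof.
move=> HV; apply: ordge_sum => p _.
by apply: (@ordge_le _ _ (d + mdeg p)); [apply: leq_addr | apply: ordge_lagr_term].
Qed.

Lemma ordge_lagrB N N' V : (N <= N')%N -> ordge N.+1 (lagr N' V - lagr N V).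
Proof.
move=> le; rewrite /lagr (big_mnms_le_split _ le) addrAC subrr add0r.
apply: ordge_sum => p lt; apply: (@ordge_le _ _ (0 + mdeg p)) => //.
exact: ordge_lagr_term.
Qed.

Lemma lagr1_coef0 N : (lagr N 1)@_0%MM = 1.
Proof.
rewrite raddf_sum (bigD1_seq 0%MM) ?mnms_le_uniq ?mem_mnms_le ?mdeg0 //= big1 ?addr0.
  by rewrite /lagr_term mnm_fact0 mpow0 mulr1 mderivm0m invr1 scale1r mcoeff1 eqxx.
move=> p ne; apply: (ordge_lagr_term (d := 0)) => //.
by rewrite add0n mdeg0 lt0n mdeg_eq0.
Qed.

Lemma lagr_mulX N V j : lagr N.+1 (V * 'X_j) = 'X_j * lagr N.+1 V + lagr N (V * h j).
Proof.
rewrite /lagr mulr_sumr.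
rewrite (eq_bigr (fun p => 'X_j * lagr_term V p + (p j)%:R *:
   ((mnm_fact p)%:R^-1 *: (V * mpow h p)^`M[p - U_(j)]))); last first.
  move=> p _; rewrite /lagr_term -mulrA mulrCA mderivm_mulX scalerDr scalerAr.
  by rewrite !scalerA [_^-1 * _]mulrC.
rewrite big_split /=; congr (_ + _); rewrite big_mnms_le_shift; apply: eq_bigr => q _.
rewrite scalerA mnm_factD1 natrM invfM mulrA mulrAC mulfV ?char0_natr_neq0 //.
by rewrite mul1r addmK mpowD1 /lagr_term -mulrA [mpow h q * _]mulrC mulrA.
Qed.

Lemma ordge_lagr_mulF N V j : ordge N.+1 (lagr N.+1 (V * fvar j) - 'X_j * lagr N.+1 V).
Proof.
rewrite /fvar mulrBr lagrB lagr_mulX.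
have -> : 'X_j * lagr N.+1 V + lagr N (V * h j) - lagr N.+1 (V * h j) -
          'X_j * lagr N.+1 V = - (lagr N.+1 (V * h j) - lagr N (V * h j)) by ring.
exact/ordgeN/ordge_lagrB.
Qed.

Lemma ordge_lagr_mul_mpowF N V a :
  ordge N.+1 (lagr N.+1 (V * mpow fvar a) - 'X_[a] * lagr N.+1 V).
Proof.
elim/mnm_ind: a => [|a i IH].
  by rewrite mpow0 mpolyX0 mulr1 mul1r subrr; apply: ordge0.
rewrite mpowD1 mulrA mpolyXD.
have -> : lagr N.+1 (V * mpow fvar a * fvar i) - 'X_[a] * 'X_i * lagr N.+1 V =
    (lagr N.+1 (V * mpow fvar a * fvar i) - 'X_i * lagr N.+1 (V * mpow fvar a)) +
    'X_i * (lagr N.+1 (V * mpow fvar a) - 'X_[a] * lagr N.+1 V) by ring.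
apply: ordgeD; first exact: ordge_lagr_mulF.
by rewrite -[N.+1]add0n; apply: ordgeM.
Qed.

Lemma ordge_lagr_lincomb N (r : seq 'X_{1..n}) (c : 'X_{1..n} -> K) :
  ordge N.+1 (lagr N.+1 (\sum_(a <- r) c a *: mpow fvar a) -
              (\sum_(a <- r) c a *: 'X_[a]) * lagr N.+1 1).
Proof.
rewrite lagr_sum mulr_suml -sumrB; apply: ordge_sum => a _.
rewrite lagrZ -scalerAl -scalerBr; apply: ordgeZ.
by have := @ordge_lagr_mul_mpowF N 1 a; rewrite mul1r.
Qed.

Lemma lagr_term_mderiv j V p :
  lagr_term (mderiv j V) p = mderiv j (lagr_term V p) -
  \sum_(k < n) (p k)%:R *: ((mnm_fact p)%:R^-1 *:
                 (V * mderiv j (h k) * mpow h (p - U_(k))%MM)^`M[p]).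
Proof.
rewrite /lagr_term mderivZ mderiv_mderivm mderivM mderivmD scalerDr.
suff -> : \sum_(k < n) (p k)%:R *: ((mnm_fact p)%:R^-1 *:
            (V * mderiv j (h k) * mpow h (p - U_(k))%MM)^`M[p]) =
          (mnm_fact p)%:R^-1 *: (V * mderiv j (mpow h p))^`M[p] by rewrite addrK.
rewrite mderiv_mpow mulr_sumr raddf_sum scaler_sumr; apply: eq_bigr => k _.
by rewrite -mulrA scalerA mulrC -scalerA -mderivmZ scalerAr.
Qed.

Lemma lagr_mderiv N V j :
  lagr N.+1 (mderiv j V) =
  mderiv j (lagr N.+1 V) - \sum_(k < n) mderiv k (lagr N (V * mderiv j (h k))).
Proof.
rewrite /lagr (eq_bigr _ (fun p _ => lagr_term_mderiv j V p)) sumrB.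
rewrite (raddf_sum (mderiv j)); congr (_ - _).
rewrite exchange_big /=; apply: eq_bigr => k _.
rewrite big_mnms_le_shift raddf_sum; apply: eq_bigr => q _.
rewrite scalerA mnm_factD1 natrM invfM mulrA mulrAC mulfV ?char0_natr_neq0 //.
by rewrite mul1r addmK /= /lagr_term mderivZ mderivmD1.
Qed.

(* Since [d_j F_k = delta_jk - d_j h_k], this is [lagr_mderiv] up to truncation. *)
Lemma ordge_lagr_div N V j :
  ordge N (\sum_(k < n) mderiv k (lagr N.+1 (V * mderiv j (fvar k))) -
           lagr N.+1 (mderiv j V)).
Proof.
rewrite lagr_mderiv.
have -> : \sum_(k < n) mderiv k (lagr N.+1 (V * mderiv j (fvar k))) =
    mderiv j (lagr N.+1 V) - \sum_(k < n) mderiv k (lagr N.+1 (V * mderiv j (h k))).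
  rewrite /fvar (eq_bigr (fun k => mderiv k (lagr N.+1 (V * (k == j)%:R)) -
      mderiv k (lagr N.+1 (V * mderiv j (h k))))); last first.
    by move=> k _; rewrite mderivB mderiv_var mulrBr lagrB mderivB.
  rewrite sumrB (bigD1 j) //= eqxx mulr1 big1 ?addr0 // => k ne.
  by rewrite (negbTE ne) mulr0 lagr0 mderiv0.
have -> : forall a b c : P, a - b - (a - c) = - (b - c) by move=> a b c; ring.
apply/ordgeN; rewrite -sumrB; apply: ordge_sum => k _; rewrite -mderivB.
exact/ordge_mderiv/ordge_lagrB.
Qed.

Lemma ordge_mderiv_lagr_det N l : ordge N (mderiv l (lagr N.+1 (\det jacobian))).
Proof.
have H : ordge N (\sum_(j < n)
    (\sum_(k < n) mderiv k (lagr N.+1 (\adj jacobian l j * mderiv j (fvar k))) -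
     lagr N.+1 (mderiv j (\adj jacobian l j)))).
  by apply: ordge_sum => j _; apply: ordge_lagr_div.
rewrite sumrB -lagr_sum sum_mderiv_adj // lagr0 subr0 exchange_big /= in H.
congr (ordge N _): H.
rewrite (eq_bigr (fun k => mderiv k (lagr N.+1 ((\adj jacobian *m jacobian) l k)))).
  rewrite mul_adj_mx (bigD1 l) //= big1 ?addr0 ?mxE ?eqxx ?mulr1n //.
  by move=> k ne; rewrite mxE eq_sym (negbTE ne) mulr0n lagr0 mderiv0.
move=> k _; rewrite -raddf_sum -lagr_sum mxE; congr (mderiv k (lagr _ _)).
by apply: eq_bigr => j _; rewrite [jacobian j k]mxE.
Qed.

Lemma ordge_lagr1 N : ordge N.+1 (\det jacobian - 1) -> ordge N.+1 (lagr N.+1 1 - 1).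
Proof.
move=> Hdet; suff D1 : forall l, ordge N (mderiv l (lagr N.+1 1)).
  by have := ordge_sub_coef0 charK D1; rewrite lagr1_coef0 mpolyC1.
move=> l; have -> : lagr N.+1 1 = lagr N.+1 (\det jacobian) - lagr N.+1 (\det jacobian - 1).
  by rewrite lagrB; ring.
rewrite mderivB; apply: ordgeB; first exact: ordge_mderiv_lagr_det.
exact/ordge_mderiv/ordge_lagr.
Qed.

Theorem ordge_lagr_comp N (r : seq 'X_{1..n}) (c : 'X_{1..n} -> K) :
  ordge N.+1 (\det jacobian - 1) ->
  ordge N.+1 (lagr N.+1 (\sum_(a <- r) c a *: mpow fvar a) - \sum_(a <- r) c a *: 'X_[a]).
Proof.
move=> Hdet; set u := \sum_(a <- r) _ *: 'X_[a].
have -> : forall x : P, x - u = (x - u * lagr N.+1 1) + u * (lagr N.+1 1 - 1).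
  by move=> x; ring.
apply: ordgeD; first exact: ordge_lagr_lincomb.
by rewrite -[N.+1]add0n; apply: ordgeM => //; apply: ordge_lagr1.
Qed.

End Lagrange.

Section Truncation.
Variables (K : fieldType) (n : nat).
Local Notation P := {mpoly K[n]}.
Local Notation fps := (fps K n).

Definition mnm_of (m : mono n) : 'X_{1..n} := [multinom m i | i < n].
Definition mono_of (m : 'X_{1..n}) : mono n := [ffun i => m i].

Lemma mnm_ofE m i : mnm_of m i = m i. Proof. by rewrite mnmE. Qed.
Lemma mnm_ofK : cancel mnm_of mono_of.
Proof. by move=> m; apply/ffunP => i; rewrite ffunE mnm_ofE. Qed.
Lemma mono_ofK : cancel mono_of mnm_of.
Proof. by move=> m; apply/mnmP => i; rewrite mnm_ofE ffunE. Qed.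

Lemma mdeg_mnm_of m : mdeg (mnm_of m) = Defs.mdeg m.
Proof. by rewrite mdegE; apply: eq_bigr => i _; rewrite mnm_ofE. Qed.
Lemma mdeg_mono_of m : Defs.mdeg (mono_of m) = mdeg m.
Proof. by rewrite -mdeg_mnm_of mono_ofK. Qed.

Lemma mnm_of_eq0 m : (mnm_of m == 0%MM) = (m == mzero n).
Proof.
apply/eqP/eqP => [E|->]; last by apply/mnmP => i; rewrite mnm_ofE mnm0E ffunE.
by apply/ffunP => i; rewrite ffunE -mnm_ofE E mnm0E.
Qed.

Lemma mnm_of_msub m x : mnm_of (msub m (mono_of x)) = (mnm_of m - x)%MM.
Proof. by apply/mnmP => i; rewrite mnm_ofE mnmBE !ffunE mnm_ofE. Qed.

Lemma mnm_of_madd1 m i : mnm_of (madd m (munit i)) = (mnm_of m + U_(i))%MM.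
Proof. by apply/mnmP => j; rewrite mnmDE !mnm_ofE mnm1E !ffunE. Qed.

Lemma mle_mono_of m x : mle (mono_of x) m = (x <= mnm_of m)%MM.
Proof. by apply/forallP/mnm_lepP => H i; have := H i; rewrite ffunE mnm_ofE. Qed.

Lemma big_mlow (V : nmodType) d (G : mono n -> V) :
  (forall p, (d < Defs.mdeg p)%N -> G p = 0) ->
  \sum_(a : {ffun 'I_n -> 'I_d.+1}) G (mlow a) = \sum_(x <- mnms_le n d) G (mono_of x).
Proof.
move=> G0; rewrite -(big_map (@mlow n d.+1) xpredT G) -(big_map mono_of xpredT G).
apply: (@eq_big_uniq_supp _ _ _ _ (fun p => Defs.mdeg p <= d)%N).
- rewrite map_inj_uniq ?index_enum_uniq // => a b E; apply/ffunP => i.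
  by apply: val_inj; move/ffunP: E => /(_ i); rewrite !ffunE.
- by rewrite map_inj_uniq ?mnms_le_uniq //; apply: (can_inj mono_ofK).
- by move=> p; rewrite -ltnNge; apply: G0.
move=> p le; apply/idP/idP => _.
  by apply/mapP; exists (mnm_of p); rewrite ?mnm_ofK // mem_mnms_le mdeg_mnm_of.
apply/mapP; exists [ffun i => inord (p i)]; first by rewrite mem_index_enum.
apply/ffunP => i; rewrite !ffunE inordK // ltnS; apply: leq_trans _ le.
by rewrite /Defs.mdeg (bigD1 i) //= leq_addr.
Qed.

Definition agree E (f : fps) (p : P) :=
  forall m : mono n, (Defs.mdeg m <= E)%N -> f m = p@_(mnm_of m).

Lemma agree_le E E' f p : (E' <= E)%N -> agree E f p -> agree E' f p.
Proof. by move=> le H m lm; apply: H; apply: leq_trans le. Qed.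

Lemma agree0 E : agree E (@fps0 K n) 0.
Proof. by move=> m _; rewrite mcoeff0. Qed.

Lemma agree1 E : agree E (@fps1 K n) 1.
Proof. by move=> m _; rewrite /fps1 mcoeff1 mnm_of_eq0; case: eqP. Qed.

Lemma agreeX E i : agree E (fps_X i) ('X_i : P).
Proof.
move=> m _; rewrite /fps_X mcoeffX.
have -> : (U_(i)%MM == mnm_of m) = (m == munit i).
  apply/eqP/eqP => [E'|->]; last by apply/mnmP => j; rewrite mnm_ofE mnm1E ffunE.
  by apply/ffunP => j; rewrite ffunE -mnm_ofE -E' mnm1E.
by case: eqP.
Qed.

Lemma agree_add E f g p q : agree E f p -> agree E g q -> agree E (fps_add f g) (p + q).
Proof. by move=> Hf Hg m lm; rewrite /fps_add mcoeffD Hf ?Hg. Qed.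

Lemma agree_scale E c f p : agree E f p -> agree E (fps_scale c f) (c *: p).
Proof. by move=> Hf m lm; rewrite /fps_scale mcoeffZ Hf. Qed.

Lemma agree_mul E f g p q : agree E f p -> agree E g q -> agree E (fps_mul f g) (p * q).
Proof.
move=> Hf Hg m lm; rewrite /fps_mul.
pose G (a : mono n) := if mle a m then f a * g (msub m a) else 0.
rewrite big_mkcond /= (eq_bigr (fun a => G (mlow a))) // big_mlow; last first.
  move=> a lt; rewrite /G; case: ifP => // /forallP le; move: lt.
  by rewrite ltnNge /Defs.mdeg leq_sum.
have := @mcoeff_poly_mul_lin n K p q (mnm_of m) (mdeg (mnm_of m)).+1 (ltnSn _).
rewrite /mpoly_mul => ->; rewrite [RHS]big_mkcond /=.
rewrite (big_bmnm _ (fun x => if (x <= mnm_of m)%MM then p@_x * q@_(mnm_of m - x)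
                              else 0)) mdeg_mnm_of.
apply: eq_big_seq => x; rewrite mem_mnms_le => lx.
rewrite /G mle_mono_of; case: ifP => // le.
rewrite Hf ?Hg ?mono_ofK ?mnm_of_msub //; last first.
  by rewrite mdeg_mono_of; apply: leq_trans lx lm.
rewrite -mdeg_mnm_of mnm_of_msub; apply: leq_trans lm; rewrite -mdeg_mnm_of.
exact: mdegB.
Qed.

Lemma agree_exp E f p k : agree E f p -> agree E (fps_exp f k) (p ^+ k).
Proof.
move=> Hf; elim: k => [|k IH]; first by rewrite expr0; apply: agree1.
by rewrite exprS /fps_exp iterS; apply: agree_mul.
Qed.

Lemma agree_mpow E (Fs : 'I_n -> fps) (g : 'I_n -> P) a :
  (forall i, agree E (Fs i) (g i)) -> agree E (fps_mpow Fs a) (mpow g (mnm_of a)).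
Proof.
move=> HF; apply: (big_ind2 (agree E)); first exact: agree1.
  by move=> *; apply: agree_mul.
by move=> i _; rewrite mnm_ofE; apply: agree_exp.
Qed.

Lemma agree_deriv E i f p : agree E.+1 f p -> agree E (fps_deriv i f) (mderiv i p).
Proof.
move=> Hf m lm; rewrite /fps_deriv mcoeff_mderiv Hf; last first.
  by rewrite -mdeg_mnm_of mnm_of_madd1 mdegD mdeg1 addn1 ltnS mdeg_mnm_of.
by rewrite mnm_of_madd1 mulr_natl mnm_ofE.
Qed.

Lemma agree_iter_deriv k E i f p :
  agree (E + k) f p -> agree E (iter k (fps_deriv i) f) (iter k (mderiv i) p).
Proof.
elim: k E => [|k IH] E H; first by move: H; rewrite addn0.
by rewrite !iterS; apply/agree_deriv/IH; rewrite addSnnS.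
Qed.

Lemma agree_derivs E a f p :
  agree (E + Defs.mdeg a) f p -> agree E (fps_derivs a f) (p^`M[mnm_of a]).
Proof.
have -> : Defs.mdeg a = (\sum_(i <- enum 'I_n) a i)%N by rewrite /Defs.mdeg enumT.
rewrite /fps_derivs /mderivm; elim: (enum 'I_n) E => [|x s IH] E H /=.
  by move: H; rewrite big_nil addn0.
rewrite mnm_ofE; apply/agree_iter_deriv/IH.
by move: H; rewrite big_cons addnA [(E + _)%N]addnC.
Qed.

Lemma agree_det E (M : 'I_n -> 'I_n -> fps) (A : 'M[P]_n) :
  (forall i j, agree E (M i j) (A i j)) -> agree E (fps_det M) (\det A).
Proof.
move=> HM; apply: (big_ind2 (agree E)); first exact: agree0.
  by move=> *; apply: agree_add.
move=> s _.
have -> : ((-1) ^+ s * \prod_i A i (s i) : P) = ((-1) ^+ s : K) *: \prod_i A i (s i).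
  by case: (odd_perm s); rewrite ?expr0 ?mul1r ?scale1r ?expr1 ?mulN1r ?scaleN1r.
apply: agree_scale; apply: (big_ind2 (agree E)); first exact: agree1.
  by move=> *; apply: agree_mul.
by move=> i _; apply: HM.
Qed.

Definition fps_trunc E (f : fps) : P := \sum_(a <- mnms_le n E) f (mono_of a) *: 'X_[a].

Lemma mcoeff_fps_trunc E f x :
  (fps_trunc E f)@_x = if (mdeg x <= E)%N then f (mono_of x) else 0.
Proof.
rewrite /fps_trunc raddf_sum /=; case: ifP => lx.
  rewrite (bigD1_seq x) ?mnms_le_uniq ?mem_mnms_le //= big1 ?addr0.
    by rewrite mcoeffZ mcoeffX eqxx mulr1.
  by move=> a ne; rewrite mcoeffZ mcoeffX (negbTE ne) mulr0.
rewrite big_seq big1 // => a; rewrite mem_mnms_le => la; rewrite mcoeffZ mcoeffX.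
by case: eqP => [E'|]; [move: la; rewrite E' lx | rewrite mulr0].
Qed.

Lemma agree_trunc E f : agree E f (fps_trunc E f).
Proof. by move=> m lm; rewrite mcoeff_fps_trunc mdeg_mnm_of lm mnm_ofK. Qed.

Lemma agree_comp E U (Fs : 'I_n -> fps) (g : 'I_n -> P) :
  (forall i, agree E (Fs i) (g i)) -> (forall i, ordge 1 (g i)) ->
  agree E (fps_comp U Fs) (\sum_(a <- mnms_le n E) U (mono_of a) *: mpow g a).
Proof.
move=> HF Hg m lm.
pose G (a : mono n) := U a * (mpow g (mnm_of a))@_(mnm_of m).
have Hv a : (mdeg (mnm_of m) < mdeg a)%N -> (mpow g a)@_(mnm_of m) = 0.
  by move=> lt; apply: (ordge_mpow (d := 1)); rewrite // mul1n.
rewrite /fps_comp (eq_bigr (fun a => G (mlow a))); last first.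
  by move=> a _; rewrite /G (agree_mpow _ HF lm).
rewrite big_mlow; last by move=> a lt; rewrite /G Hv ?mulr0 // !mdeg_mnm_of.
rewrite raddf_sum /=; apply/esym.
rewrite [RHS](eq_bigr (fun a => (U (mono_of a) *: mpow g a)@_(mnm_of m))); last first.
  by move=> a _; rewrite /G mcoeffZ mono_ofK.
apply: (@eq_big_uniq_supp _ _ _ _ (fun a => mdeg a <= Defs.mdeg m)%N).
- exact: mnms_le_uniq.
- exact: mnms_le_uniq.
- by move=> a; rewrite -ltnNge -mdeg_mnm_of => lt; rewrite mcoeffZ Hv ?mulr0.
by move=> a la; rewrite !mem_mnms_le la; apply: leq_trans la lm.
Qed.

End Truncation.

Section Inversion.
Variables (K : fieldType) (n : nat) (F : 'I_n -> fps K n).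
Hypothesis charK : [pchar K] =i pred0.
Hypothesis F_ord2 : forall (i : 'I_n) (m : mono n),
  (Defs.mdeg m < 2)%N -> fps_sub (fps_X i) (F i) m = 0.
Hypothesis F_jac : fps_det (fun i j => fps_deriv i (F j)) = @fps1 K n.
Local Notation P := {mpoly K[n]}.

Definition fpsH i := fps_sub (fps_X i) (F i).
Definition htrunc E i : P := fps_trunc E (fpsH i).

Lemma ordge_htrunc E i : ordge 2 (htrunc E i).
Proof.
move=> m lt; rewrite mcoeff_fps_trunc; case: ifP => // _.
by apply: F_ord2; rewrite mdeg_mono_of.
Qed.

Lemma agree_F E i : agree E (F i) (fvar (htrunc E) i).
Proof.
move=> m lm; rewrite mcoeffB -(agreeX K i lm) -(agree_trunc (fpsH i) lm).
by rewrite /fpsH /fps_sub; ring.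
Qed.

Lemma ordge_fvar E i : ordge 1 (fvar (htrunc E) i).
Proof.
apply: ordgeB; first by have := @ordgeXm K n U_(i)%MM; rewrite mdeg1.
exact/(@ordge_le _ _ 2)/ordge_htrunc.
Qed.

Lemma ordge_jacobian_det E D : (D < E)%N -> ordge D.+1 (\det (jacobian (htrunc E)) - 1).
Proof.
move=> lt x lx; have E_gt0 : (0 < E)%N by apply: leq_ltn_trans lt.
have A : agree E.-1 (fps_det (fun i j => fps_deriv i (F j))) (\det (jacobian (htrunc E))).
  apply: agree_det => i j; rewrite mxE; apply: agree_deriv.
  by rewrite prednK //; apply: agree_F.
have lx' : (Defs.mdeg (mono_of x) <= E.-1)%N.
  by rewrite mdeg_mono_of -ltnS prednK //; apply: leq_trans lt.
by rewrite mcoeffB -(mono_ofK x) -(A _ lx') F_jac (agree1 K lx') subrr.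
Qed.

Definition comp_trunc E U : P :=
  \sum_(a <- mnms_le n E) U (mono_of a) *: mpow (fvar (htrunc E)) a.

Lemma inversion_term_coef E U a m : (Defs.mdeg m + Defs.mdeg a <= E)%N ->
  fps_scale (mfact a)%:R^-1 (fps_derivs a (fps_mul (fps_comp U F) (fps_mpow fpsH a))) m
  = (lagr_term (htrunc E) (comp_trunc E U) (mnm_of a))@_(mnm_of m).
Proof.
move=> le; rewrite /fps_scale /lagr_term mcoeffZ.
have -> : mfact a = mnm_fact (mnm_of a).
  by apply: eq_bigr => i _; rewrite mnm_ofE.
congr (_ * _); apply: (agree_derivs (agree_le le _)) => //.
apply: agree_mul; first by apply: agree_comp; [apply: agree_F | apply: ordge_fvar].
by apply: agree_mpow => i; apply: agree_trunc.
Qed.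

Lemma lagrange_inversion U :
  fps_has_sum (fun p => fps_scale (mfact p)%:R^-1
                  (fps_derivs p (fps_mul (fps_comp U F) (fps_mpow fpsH p)))) U.
Proof.
move=> m; set D := Defs.mdeg m; set E := (D + D.+1)%N.
exists (map (@mono_of n) (mnms_le n D.+1)); split.
- by rewrite map_inj_uniq ?mnms_le_uniq //; apply: (can_inj (@mono_ofK n)).
- move=> a aD; have lt : (D.+1 < Defs.mdeg a)%N.
    rewrite ltnNge; apply: contra aD => le; apply/mapP; exists (mnm_of a).
      by rewrite mem_mnms_le mdeg_mnm_of.
    by rewrite mnm_ofK.
  rewrite (@inversion_term_coef (D + Defs.mdeg a)) //.
  apply: (ordge_lagr_term (ordge_htrunc _) (d := 0)) => //.
  by rewrite add0n !mdeg_mnm_of; apply: ltn_trans lt.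
rewrite big_map (eq_big_seq (fun x =>
    (lagr_term (htrunc E) (comp_trunc E U) x)@_(mnm_of m))); last first.
  move=> x; rewrite mem_mnms_le => lx; rewrite (@inversion_term_coef E) ?mono_ofK //.
  by rewrite mdeg_mono_of leq_add2l.
rewrite -raddf_sum -/(lagr (htrunc E) D.+1 (comp_trunc E U)).
have := ordge_lagr_comp (@ordge_htrunc E) charK (mnms_le n E) (fun a => U (mono_of a))
                        (ordge_jacobian_det (leq_addl D D.+1)).
move=> /(_ (mnm_of m)); rewrite mdeg_mnm_of => /(_ (ltnSn _)).
rewrite mcoeffB -/(comp_trunc E U) => /eqP; rewrite subr_eq0 => /eqP lagr_coef; rewrite /= lagr_coef.
by rewrite -/(fps_trunc E U) mcoeff_fps_trunc mdeg_mnm_of mnm_ofK leq_addr.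
Qed.

End Inversion.

Theorem mainTheorem1 (K : fieldType) (n : nat) (F G : 'I_n -> fps K n)
  (charK : [pchar K] =i pred0)
  (Hdeg : forall (i : 'I_n) (m : mono n),
     (Defs.mdeg m < 2)%N -> fps_sub (fps_X i) (F i) m = 0)
  (Hjac : fps_det (fun i j => fps_deriv i (F j)) = @fps1 K n)
  (HGF : forall i, fps_comp (G i) F = fps_X i)
  (HFG : forall i, fps_comp (F i) G = fps_X i) :
  let H := fun j => fps_sub (fps_X j) (F j) in
  (forall i : 'I_n,
     fps_has_sum (fun p => fps_scale (mfact p)%:R^-1
                    (fps_derivs p (fps_mul (fps_X i) (fps_mpow H p))))
                 (G i))
  /\
  (forall U : fps K n,
     fps_has_sum (fun p => fps_scale (mfact p)%:R^-1
                    (fps_derivs p (fps_mul (fps_comp U F) (fps_mpow H p))))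
                 U).
Proof.
move=> H; split; last exact: lagrange_inversion.
by move=> i; have := lagrange_inversion charK Hdeg Hjac (G i); rewrite HGF.
Qed.
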